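(* Let $R$ be a commutative ring with unit, $I$ an ideal of $R$, and $M$ an $R$-module. (1) If $I$ is principal, then $H_R(I,M)=0$. (2) If $R$ is an integral domain and $M$ is torsion-free, then $H_R(I,M)=0$. (3) If $R$ is a Dedekind domain, then $H_R(I,M)=0$. (4) If $R$ is a reduced ring with finitely many minimal prime ideals (in particular, a reduced noetherian ring), then $H_R(I,R)=0$.
   Context: $Z_R(I,M)=\{\varphi\in\mathrm{Hom}_R(I,M):\varphi(t)\in tM\text{ for all }t\in I\}$; $B_R(I,M)$ is the submodule of $\varphi\in Z_R(I,M)$ for which there exists $m\in M$ with $\varphi(t)=tm$ for all $t\in I$; $H_R(I,M)=Z_R(I,M)/B_R(I,M)$. *)

From HB Require Import structures.
From mathcomp Require Import all_boot all_order all_algebra.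
From mathcomp Require Import fraction.
Set Implicit Arguments. Unset Strict Implicit. Unset Printing Implicit Defensive.
Import Order.TTheory GRing.Theory Num.Theory.
Local Open Scope ring_scope.

Definition is_ideal (R : comPzRingType) (I : pred R) : Prop :=
  [/\ 0 \in I,
      (forall x y, x \in I -> y \in I -> x + y \in I) &
      (forall r x, x \in I -> r * x \in I)].

Definition principal_ideal (R : comPzRingType) (I : pred R) : Prop :=
  exists a : R, forall x, x \in I <-> exists r : R, x = r * a.

(* phi : R -> M represents an element of Hom_R(I,M): it is R-linear on I
   (values outside I are irrelevant). *)
Definition hom_on (R : comPzRingType) (M : lmodType R) (I : pred R)
  (phi : R -> M) : Prop :=
  forall r t s, t \in I -> s \in I -> phi (r * t + s) = r *: phi t + phi s.

Definition in_Z (R : comPzRingType) (M : lmodType R) (I : pred R)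
  (phi : R -> M) : Prop :=
  hom_on I phi /\ forall t, t \in I -> exists m : M, phi t = t *: m.

Definition in_B (R : comPzRingType) (M : lmodType R) (I : pred R)
  (phi : R -> M) : Prop :=
  in_Z I phi /\ exists m : M, forall t, t \in I -> phi t = t *: m.

(* H_R(I,M) = Z_R(I,M)/B_R(I,M) = 0, i.e. Z_R(I,M) = B_R(I,M). *)
Definition H_zero (R : comPzRingType) (M : lmodType R) (I : pred R) : Prop :=
  forall phi : R -> M, in_Z I phi -> in_B I phi.

Definition torsion_free (R : idomainType) (M : lmodType R) : Prop :=
  forall (r : R) (m : M), r *: m = 0 -> r = 0 \/ m = 0.

Definition prime_ideal (R : comPzRingType) (P : pred R) : Prop :=
  [/\ is_ideal P, 1 \notin P &
      forall a b, a * b \in P -> a \in P \/ b \in P].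

Definition maximal_ideal (R : comPzRingType) (P : pred R) : Prop :=
  [/\ is_ideal P, 1 \notin P &
      forall J : pred R, is_ideal J -> {subset P <= J} ->
        (forall x, x \in J <-> x \in P) \/ (forall x, x \in J)].

Definition noetherian (R : comPzRingType) : Prop :=
  forall I : pred R, is_ideal I ->
    exists s : seq R, forall x, x \in I <->
      exists c : 'I_(size s) -> R, x = \sum_(i < size s) c i * s`_i.

Definition integrally_closed (R : idomainType) : Prop :=
  forall x : {fraction R},
    (exists p : {poly R}, p \is monic /\ root (map_poly (@FracField.tofrac R) p) x) ->
    exists r : R, x = FracField.tofrac r.

Definition dedekind (R : idomainType) : Prop :=
  [/\ noetherian R, integrally_closed R &
      forall P : pred R, prime_ideal P -> (exists x, x \in P /\ x != 0) ->
        maximal_ideal P].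

Definition reduced (R : comPzRingType) : Prop :=
  forall (x : R) (n : nat), x ^+ n = 0 -> x = 0.

Definition minimal_prime (R : comPzRingType) (P : pred R) : Prop :=
  prime_ideal P /\
  forall Q : pred R, prime_ideal Q -> {subset Q <= P} -> {subset P <= Q}.

Definition finitely_many_minimal_primes (R : comPzRingType) : Prop :=
  exists (n : nat) (f : 'I_n -> pred R),
    forall P : pred R, minimal_prime P -> exists i, forall x, x \in P <-> x \in f i.

From HB Require Import structures.
From mathcomp Require Import all_boot all_order all_algebra.
From mathcomp Require Import fraction.
From mathcomp Require Import boolp wochoice.
From mathcomp Require Import ring.
Import GRing.Theory.
Local Open Scope ring_scope.
Set Implicit Arguments. Unset Strict Implicit.

(* If [I = aR], a cocycle [phi] is determined by [phi a = a m].  Over a domain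
   with [M] torsion-free, one nonzero [a \in I] pins down [m], since
   [a (phi t - t m) = 0].  If [I] has a dual basis [t = sum_i f_i(t) a_i] (it is
   projective), linearity of the [f_i] gives [f_i(t) a_i = t f_i(a_i)], hence
   [phi t = t * sum_i f_i(a_i) m_i]; an invertible ideal ([I I^-1 = R]) has such a
   basis, and in a Dedekind domain every nonzero ideal is invertible by the
   classical argument (Noether's prime products and the determinant trick).  For a
   reduced ring, prime avoidance gives [t \in I] outside the finitely many minimal
   primes not containing [I]; writing [phi t = t r], each [phi s - s r] is killed
   by [t], so it lies in every minimal prime, and these intersect in [0]. *)

Section Ideals.
Variables (R : comPzRingType) (I : pred R).
Hypothesis ideal_I : is_ideal I.

Lemma ideal0 : 0 \in I. Proof. by case: ideal_I. Qed.

Lemma idealD x y : x \in I -> y \in I -> x + y \in I.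
Proof. by case: ideal_I => _ + _; apply. Qed.

Lemma idealMl r x : x \in I -> r * x \in I.
Proof. by case: ideal_I => _ _; apply. Qed.

Lemma idealMr x r : x \in I -> x * r \in I.
Proof. by rewrite mulrC; apply: idealMl. Qed.

Lemma idealN x : x \in I -> - x \in I.
Proof. by rewrite -mulN1r; apply: idealMl. Qed.

Lemma idealB x y : x \in I -> y \in I -> x - y \in I.
Proof. by move=> xI /idealN; apply: idealD. Qed.

Lemma not_subset_witness (T : Type) (A B : pred T) :
  ~ {subset A <= B} -> exists2 x, x \in A & x \notin B.
Proof.
move=> AB; apply: contrapT => nox; apply: AB => x xA.
by apply: contrapT => /negP xB; apply: nox; exists x.
Qed.

Lemma ideal_sum (T : Type) (s : seq T) (P : pred T) (F : T -> R) :
  (forall i, P i -> F i \in I) -> \sum_(i <- s | P i) F i \in I.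
Proof. by apply: (big_ind (fun x => x \in I)); [exact: ideal0 | exact: idealD]. Qed.

End Ideals.

Section HomOn.
Variables (R : comPzRingType) (M : lmodType R) (I : pred R) (phi : R -> M).
Hypotheses (ideal_I : is_ideal I) (hphi : hom_on I phi).

Lemma hom_on0 : phi 0 = 0.
Proof.
have := hphi 1 (ideal0 ideal_I) (ideal0 ideal_I).
rewrite mulr0 addr0 scale1r => /(congr1 (fun x => x - phi 0)).
by rewrite subrr addrK.
Qed.

Lemma hom_onZ r t : t \in I -> phi (r * t) = r *: phi t.
Proof. by move=> tI; rewrite -[r * t]addr0 hphi ?ideal0 // hom_on0 addr0. Qed.

Lemma hom_on_sum (T : eqType) (s : seq T) (c a : T -> R) :
  {in s, forall i, a i \in I} ->
  phi (\sum_(i <- s) c i * a i) = \sum_(i <- s) c i *: phi (a i).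
Proof.
elim: s => [|i s IH] sI; first by rewrite !big_nil hom_on0.
have sI' : {in s, forall j, a j \in I} by move=> j js; rewrite sI // inE js orbT.
rewrite !big_cons hphi ?IH ?sI ?mem_head //.
by rewrite big_seq; apply: ideal_sum => // j /sI'; apply: idealMl.
Qed.

End HomOn.

Lemma H_zero_wlog_nonzero (R : comPzRingType) (M : lmodType R) (I : pred R) :
  is_ideal I -> ((exists2 a, a \in I & a != 0) -> H_zero M I) -> H_zero M I.
Proof.
move=> ideal_I H_nz.
have [/H_nz //|I0 phi [hphi hZ]] := pselect (exists2 a, a \in I & a != 0).
split=> //; exists 0 => t tI; rewrite scaler0.
have [->|t0] := eqVneq t 0; first exact: hom_on0 ideal_I hphi.
by case: I0; exists t.
Qed.

Lemma H_zero_principal (R : comPzRingType) (I : pred R) (M : lmodType R) :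
  is_ideal I -> principal_ideal I -> H_zero M I.
Proof.
move=> ideal_I [a Ia] phi [hphi hZ]; split=> //.
have aI : a \in I by apply/Ia; exists 1; rewrite mul1r.
have [m hm] := hZ a aI; exists m => t /Ia [r ->].
by rewrite (hom_onZ ideal_I hphi _ aI) hm scalerA.
Qed.

Lemma H_zero_torsion_free (R : idomainType) (I : pred R) (M : lmodType R) :
  is_ideal I -> torsion_free M -> H_zero M I.
Proof.
move=> ideal_I tfM; apply: H_zero_wlog_nonzero => // -[a aI a0] phi [hphi hZ].
split=> //; have [m hm] := hZ a aI; exists m => t tI.
have : a *: (phi t - t *: m) = 0.
  rewrite scalerBr -(hom_onZ ideal_I hphi _ tI) mulrC (hom_onZ ideal_I hphi _ aI) hm.
  by rewrite !scalerA mulrC subrr.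
move=> /tfM [a0'|/eqP]; first by rewrite a0' eqxx in a0.
by rewrite subr_eq0 => /eqP.
Qed.

Definition dual_basis (R : comPzRingType) (I : pred R) (T : eqType) (s : seq T)
    (a : T -> R) (f : T -> R -> R) : Prop :=
  [/\ {in s, forall i, a i \in I},
      {in s, forall i r t, t \in I -> f i (r * t) = r * f i t} &
      forall t, t \in I -> t = \sum_(i <- s) f i t * a i].

Lemma H_zero_dual_basis (R : comPzRingType) (I : pred R) (M : lmodType R)
    (T : eqType) (s : seq T) (a : T -> R) (f : T -> R -> R) :
  is_ideal I -> dual_basis I s a f -> H_zero M I.
Proof.
move=> ideal_I [sI flin dec] phi [hphi hZ]; split=> //.
have /choice [m hm] : forall i, exists m : M, i \in s -> phi (a i) = a i *: m.
  move=> i; have [/sI/hZ [m hm]|_] := boolP (i \in s); last by exists 0.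
  by exists m.
exists (\sum_(i <- s) f i (a i) *: m i) => t tI.
have -> : phi t = phi (\sum_(i <- s) f i t * a i) by rewrite -dec.
rewrite (hom_on_sum ideal_I hphi) // scaler_sumr big_seq [RHS]big_seq.
apply: eq_bigr => i si.
rewrite hm // !scalerA; congr (_ *: _).
by rewrite mulrC -(flin i si) ?sI // [t * a i]mulrC (flin i si).
Qed.

Section ChainUnion.
Variables (T : eqType) (C : {pred pred T}).
Hypotheses (Ctot : {in C &, forall A B, {subset A <= B} \/ {subset B <= A}})
  (Cne : exists A, A \in C).

Definition chain_union : pred T := fun x => `[< exists2 A, A \in C & x \in A >].

Lemma chain_union_sup A : A \in C -> {subset A <= chain_union}.
Proof. by move=> CA x xA; apply/asboolP; exists A. Qed.

Lemma chain_union_seq (s : seq T) :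
  {subset s <= chain_union} -> exists2 B, B \in C & {subset s <= B}.
Proof.
elim: s => [|x s IH] sU; first by have [A CA] := Cne; exists A.
have [|B CB sB] := IH; first by move=> y ys; rewrite sU // inE ys orbT.
have /asboolP [A CA xA] := sU x (mem_head x s).
have [AB|BA] := Ctot CA CB.
  by exists B => // y; rewrite inE => /orP [/eqP -> | /sB]; first exact: AB.
by exists A => // y; rewrite inE => /orP [/eqP -> // | /sB /BA].
Qed.

End ChainUnion.

Lemma Zorn_pred (T : Type) (S : pred T -> Prop) :
  (exists A, S A) ->
  (forall C : {pred pred T}, (forall A, A \in C -> S A) ->
     {in C &, forall A B, {subset A <= B} \/ {subset B <= A}} ->
     (exists A, A \in C) ->
     exists2 B, S B & forall A, A \in C -> {subset A <= B}) ->
  exists2 M, S M & forall A, S A -> {subset M <= A} -> {subset A <= M}.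
Proof.
move=> [A0 SA0] chain_ub.
have [|||M /asboolP SM Mmax] :=
  @Zorn's_lemma (pred T) (fun A B => `[< {subset A <= B} >]) [pred A | `[< S A >]].
- by move=> A _; apply/asboolP.
- by move=> B A D _ _ _ /asboolP AB /asboolP BD; apply/asboolP => x /AB /BD.
- move=> C CS Cwo; have [Cne|C0] := pselect (exists A, A \in C); last first.
    by exists A0; [apply/asboolP | move=> A CA; case: C0; exists A].
  have Ctot : {in C &, forall A B, {subset A <= B} \/ {subset B <= A}}.
    by move=> A B CA CB; case/orP: (wo_chainW Cwo CA CB) => /asboolP; [left|right].
  have [B SB ub] := chain_ub C (fun A CA => asboolW (CS A CA)) Ctot Cne.
  by exists B; [apply/asboolP | move=> A /ub ?; apply/asboolP].
exists M => // A SA MA; apply/asboolP/Mmax; apply/asboolP => //.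
Qed.

Section Noetherian.
Variable R : comPzRingType.

Definition generates (s : seq R) (I : pred R) : Prop :=
  forall x, x \in I <-> exists c : 'I_(size s) -> R, x = \sum_(i < size s) c i * s`_i.

Lemma generates_mem s I : generates s I -> {subset s <= I}.
Proof.
move=> gen x xs; apply/gen; have xi : (index x s < size s)%N by rewrite index_mem.
pose i := Ordinal xi.
exists (fun j => (j == i)%:R); rewrite (bigD1 i) //= eqxx mul1r nth_index //.
by rewrite big1 ?addr0 // => j /negbTE ->; rewrite mul0r.
Qed.

Lemma generates_sub s I J :
  generates s I -> is_ideal J -> {subset s <= J} -> {subset I <= J}.
Proof.
move=> gen ideal_J sJ x /gen [c ->]; apply: ideal_sum => // i _.
by apply/idealMl/sJ/mem_nth.
Qed.

Lemma noetherian_maximal (F : pred R -> Prop) :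
  noetherian R -> (forall J, F J -> is_ideal J) -> (exists J, F J) ->
  exists2 J, F J & forall K, F K -> {subset J <= K} -> {subset K <= J}.
Proof.
move=> noethR FI FJ; apply: Zorn_pred => // C CF Ctot Cne.
have CI A : A \in C -> is_ideal A by move/CF/FI.
pose U := chain_union C.
have ideal_U : is_ideal U.
  split.
  - by have [A CA] := Cne; apply: chain_union_sup CA _ (ideal0 (CI A CA)).
  - move=> x y xU yU.
    have xyU : {subset [:: x; y] <= U} by move=> z; rewrite !inE => /orP [] /eqP ->.
    have [B CB sB] := chain_union_seq Ctot Cne xyU.
    by apply: (chain_union_sup CB); apply: (idealD (CI B CB)); apply: sB;
      rewrite !inE eqxx ?orbT.
  - move=> r x /asboolP [A CA xA].
    exact: chain_union_sup CA _ (idealMl (CI A CA) _ xA).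
(* A finite generating set of the union already lies in one member of the chain. *)
have [s gen] := noethR U ideal_U.
have [B CB sB] := chain_union_seq Ctot Cne (generates_mem gen).
exists B; first exact: CF.
move=> A CA x /(chain_union_sup CA); exact: generates_sub gen (CI B CB) sB x.
Qed.

End Noetherian.

Section PrimeIdeals.
Variable R : comPzRingType.
Implicit Types (I J M P Q : pred R) (L : seq (pred R)).

Definition ideal_addr M (c : R) : pred R :=
  fun x => `[< exists i r, i \in M /\ x = i + r * c >].

Lemma ideal_addr_ideal M c : is_ideal M -> is_ideal (ideal_addr M c).
Proof.
move=> ideal_M; split.
- by apply/asboolP; exists 0, 0; rewrite ideal0 // mul0r addr0.
- move=> _ _ /asboolP [i [r [iM ->]]] /asboolP [j [s [jM ->]]].
  by apply/asboolP; exists (i + j), (r + s); split; [apply: idealD | ring].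
- move=> u _ /asboolP [i [r [iM ->]]]; apply/asboolP; exists (u * i), (u * r).
  by split; [apply: idealMl | ring].
Qed.

Lemma ideal_addr_sub M c : is_ideal M -> {subset M <= ideal_addr M c}.
Proof. by move=> ideal_M x xM; apply/asboolP; exists x, 0; rewrite mul0r addr0. Qed.

Lemma ideal_addr_gen M c : is_ideal M -> c \in ideal_addr M c.
Proof. by move=> ideal_M; apply/asboolP; exists 0, 1; rewrite ideal0 // add0r mul1r. Qed.

Lemma ideal_addr_mul M a b x y : is_ideal M -> a * b \in M ->
  x \in ideal_addr M a -> y \in ideal_addr M b -> x * y \in M.
Proof.
move=> ideal_M abM /asboolP [i [r [iM ->]]] /asboolP [j [s [jM ->]]].
have -> : (i + r * a) * (j + s * b) = i * (j + s * b) + (r * a * j + r * s * (a * b)).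
  by ring.
by apply: (idealD ideal_M); [exact: idealMr | apply: (idealD ideal_M); exact: idealMl].
Qed.
Definition pideal (a : R) : pred R := fun x => `[< exists r, x = r * a >].

Lemma pideal_ideal a : is_ideal (pideal a).
Proof.
split; first by apply/asboolP; exists 0; rewrite mul0r.
  by move=> _ _ /asboolP [r ->] /asboolP [s ->]; apply/asboolP; exists (r + s); ring.
by move=> u _ /asboolP [r ->]; apply/asboolP; exists (u * r); ring.
Qed.

Lemma pideal_gen a : a \in pideal a.
Proof. by apply/asboolP; exists 1; rewrite mul1r. Qed.

Lemma maximal_ideal_prime P : maximal_ideal P -> prime_ideal P.
Proof.
move=> [ideal_P P1 Pmax].
have one_in c : c \notin P -> 1 \in ideal_addr P c.
  move=> cP.
  have [eqPc|] := Pmax _ (ideal_addr_ideal c ideal_P) (ideal_addr_sub c ideal_P).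
    by move/negP: cP; case; apply/eqPc/ideal_addr_gen.
  by apply.
split=> // a b abP; have [aP|aP] := boolP (a \in P); [by left | right].
apply: contrapT => /negP bP.
have := ideal_addr_mul ideal_P abP (one_in a aP) (one_in b bP).
by rewrite mulr1 (negbTE P1).
Qed.

Lemma noetherian_maximal_ideal_sup J : noetherian R -> is_ideal J -> 1 \notin J ->
  exists2 P, maximal_ideal P & {subset J <= P}.
Proof.
move=> noethR ideal_J J1.
have [P [ideal_P [JP P1]] Pmax] := noetherian_maximal
  (F := fun K => is_ideal K /\ {subset J <= K} /\ 1 \notin K) noethR (fun K h => h.1)
  (ex_intro _ J (conj ideal_J (conj (fun x h => h) J1))).
exists P => //; split=> // K ideal_K PK.
have [K1|K1] := boolP (1 \in K); last first.
  have JK : {subset J <= K} by move=> x /JP /PK.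
  by left=> x; split=> [|/PK //]; apply: (Pmax K (conj ideal_K (conj JK K1)) PK).
by right=> x; rewrite -[x]mulr1 idealMl.
Qed.

Fixpoint ideal_monomial L (y : R) : Prop :=
  if L is P :: L' then exists x z, [/\ x \in P, ideal_monomial L' z & y = x * z]
  else y = 1.

Definition prod_ideals_sub L I : Prop := forall y, ideal_monomial L y -> y \in I.

Definition primes_above I L : Prop :=
  forall P, P \in L -> prime_ideal P /\ {subset I <= P}.

Lemma ideal_monomial_cat L1 L2 y : ideal_monomial (L1 ++ L2) y ->
  exists y1 y2, [/\ ideal_monomial L1 y1, ideal_monomial L2 y2 & y = y1 * y2].
Proof.
elim: L1 y => [|P L IH] y /=; first by move=> h; exists 1, y; rewrite mul1r.
move=> [x [z [xP /IH [y1 [y2 [h1 h2 ->]]] ->]]].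
by exists (x * y1), y2; split=> //; [exists x, y1 | rewrite mulrA].
Qed.

Lemma ideal_monomial_insert L1 Q L2 y q :
  ideal_monomial (L1 ++ L2) y -> q \in Q -> ideal_monomial (L1 ++ Q :: L2) (q * y).
Proof.
elim: L1 y => [|P L IH] y /=; first by move=> h qQ; exists q, y.
move=> [x [z [xP hz ->]]] qQ; exists x, (q * z); split=> //; first exact: IH.
by rewrite mulrCA.
Qed.

Lemma prime_prod_ideals_sub P L : prime_ideal P -> prod_ideals_sub L P ->
  exists2 Q, Q \in L & {subset Q <= P}.
Proof.
move=> [ideal_P P1 Pp]; elim: L => [|Q L IH] LP; first by move: P1; rewrite LP.
have [QP|nQP] := pselect {subset Q <= P}; first by exists Q; rewrite ?mem_head.
have [q qQ qP] := not_subset_witness nQP.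
have [|Q' LQ' Q'P] := IH; last by exists Q'; rewrite // inE LQ' orbT.
move=> y hy; have /Pp [qP'|//] : q * y \in P by apply: LP; exists q, y.
by rewrite qP' in qP.
Qed.

(* Noether's argument: an ideal [M] maximal without the property is not prime, so
   [a * b \in M] for some [a, b \notin M]; then [(M + Ra) (M + Rb) <= M]. *)
Lemma noetherian_prime_prod I : noetherian R -> is_ideal I ->
  exists L, primes_above I L /\ prod_ideals_sub L I.
Proof.
move=> noethR ideal_I; apply: contrapT => noL.
have [M [ideal_M noLM] Mmax] := noetherian_maximal
  (F := fun J => is_ideal J /\ ~ exists L, primes_above J L /\ prod_ideals_sub L J)
  noethR (fun J h => h.1) (ex_intro _ I (conj ideal_I noL)).
have M1 : 1 \notin M.
  by apply/negP => M1; apply: noLM; exists [::]; split=> // y /= ->.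
have [a [b [abM aM bM]]] : exists a b, [/\ a * b \in M, a \notin M & b \notin M].
  apply: contrapT => notab; apply: noLM; exists [:: M]; split.
    move=> P; rewrite inE => /eqP ->; split=> //; split=> // a b abM.
    have [aM|aM] := boolP (a \in M); [by left | right].
    by apply: contrapT => /negP bM; apply: notab; exists a, b.
  by move=> y /= [x [z [xM -> ->]]]; rewrite mulr1.
have above c : c \notin M ->
    exists L, primes_above M L /\ prod_ideals_sub L (ideal_addr M c).
  move=> cM; apply: contrapT => noLc; move/negP: cM; apply.
  apply: (Mmax (ideal_addr M c)); last exact: ideal_addr_gen.
    split; first exact: ideal_addr_ideal.
    move=> [L [LP Lsub]]; apply: noLc; exists L; split=> // P /LP [Pp McP].
    by split=> // x /(ideal_addr_sub c ideal_M) /McP.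
  exact: ideal_addr_sub.
have [La [LaP Las]] := above a aM; have [Lb [LbP Lbs]] := above b bM.
apply: noLM; exists (La ++ Lb); split.
  by move=> P; rewrite mem_cat => /orP [/LaP | /LbP].
move=> y /ideal_monomial_cat [y1 [y2 [h1 h2 ->]]].
exact: ideal_addr_mul ideal_M abM (Las _ h1) (Lbs _ h2).
Qed.

End PrimeIdeals.

Section Dedekind.
Variable R : idomainType.
Implicit Types (I J P Q : pred R) (L : seq (pred R)).
Local Notation tf := (@FracField.tofrac R).

Lemma tofrac_inj : injective tf.
Proof. by move=> p q /eqP; rewrite tofrac_eq => /eqP. Qed.

Definition in_inv_ideal I (x : {fraction R}) : Prop :=
  forall t, t \in I -> exists r, x * tf t = tf r.

Lemma integrally_closed_eigenvalue n (C : 'M[R]_n) x :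
  integrally_closed R -> eigenvalue (map_mx tf C) x -> exists r, x = tf r.
Proof.
rewrite eigenvalue_root_char -map_char_poly => intclR ev.
by apply: intclR; exists (char_poly C); rewrite char_poly_monic.
Qed.

(* Scaled by [a], the fractional ideal [I^-1] becomes the ideal [N] of [R];
   a finite generating set of [N] turns [x] into an eigenvalue of a matrix over [R]. *)
Lemma inv_ideal_stable_integral I x :
  noetherian R -> integrally_closed R -> is_ideal I -> (exists2 a, a \in I & a != 0) ->
  (forall z, in_inv_ideal I z -> in_inv_ideal I (x * z)) -> exists r, x = tf r.
Proof.
move=> noethR intclR ideal_I [a aI a0] xstab.
have tfa0 : tf a != 0 by rewrite tofrac_eq0.
pose N : pred R := fun r => `[< in_inv_ideal I (tf r / tf a) >].
have ideal_N : is_ideal N.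
  split.
  - by apply/asboolP => t tI; exists 0; rewrite !tofrac0 !mul0r.
  - move=> r1 r2 /asboolP h1 /asboolP h2; apply/asboolP => t tI.
    have [u1 e1] := h1 t tI; have [u2 e2] := h2 t tI.
    by exists (u1 + u2); rewrite !tofracD !mulrDl e1 e2.
  - move=> c r /asboolP h; apply/asboolP => t tI.
    by have [u e] := h t tI; exists (c * u); rewrite !tofracM -e -!mulrA.
have [s gen] := noethR N ideal_N.
have xs (i : 'I_(size s)) : exists c : 'I_(size s) -> R,
    x * tf s`_i = \sum_(j < size s) tf (c j) * tf s`_j.
  have /asboolP sN := generates_mem gen (mem_nth 0 (ltn_ord i)).
  have [u e] := xstab _ sN a aI.
  have xsi : x * tf s`_i = tf u by rewrite -e mulrA divfK.
  have /(gen u) [c uE] : u \in N by apply/asboolP; rewrite -xsi -mulrA; exact: xstab.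
  by exists c; rewrite xsi uE rmorph_sum; apply: eq_bigr => j _; rewrite rmorphM.
have [c hc] := choice xs.
pose v : 'rV[{fraction R}]_(size s) := \row_j tf s`_j.
have v0 : v != 0.
  apply: contraNneq a0 => v0; have /gen [d ->] : a \in N.
    by apply/asboolP => t tI; exists t; rewrite divff // mul1r.
  apply/eqP/big1 => i _; have /rowP/(_ i) := v0; rewrite !mxE => /tofrac_inj ->.
  by rewrite mulr0.
apply: (integrally_closed_eigenvalue (C := \matrix_(i, j) c j i)) => //.
apply/eigenvalueP; exists v => //; apply/rowP => j.
by rewrite !mxE hc; apply: eq_bigr => i _; rewrite !mxE mulrC.
Qed.

(* If [P] is a maximal ideal containing [J] and [Q1 ... Qk] a shortest product of
   primes inside [aR], some [Qi] equals [P] and the product [y] of the others is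
   not in [aR]; then [y / a] works. *)
Lemma dedekind_inv_ideal_nontrivial J : dedekind R -> is_ideal J -> 1 \notin J ->
  (exists2 a, a \in J & a != 0) ->
  exists x, in_inv_ideal J x /\ ~ exists r, x = tf r.
Proof.
move=> [noethR _ prime_max] ideal_J J1 [a aJ a0].
have [P Pmax JP] := noetherian_maximal_ideal_sup noethR ideal_J J1.
have Pprime := maximal_ideal_prime Pmax.
pose short k := `[< exists L, [/\ size L = k, primes_above (pideal a) L &
                                  prod_ideals_sub L (pideal a)] >].
have short_ex : exists k, short k.
  have [L [LP Lsub]] := noetherian_prime_prod noethR (pideal_ideal a).
  by exists (size L); apply/asboolP; exists L.
case: (ex_minnP short_ex) => k /asboolP [L [sL LP Lsub]] kmin.
have aP : {subset pideal a <= P}.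
  by move=> _ /asboolP [r ->]; apply/JP/(idealMl ideal_J).
have [Q LQ QP] := prime_prod_ideals_sub Pprime (fun y hy => aP _ (Lsub y hy)).
have [Qprime aQ] := LP Q LQ.
have PQ : {subset P <= Q}.
  have [ideal_Q Q1 Qmax] : maximal_ideal Q.
    by apply: prime_max => //; exists a; rewrite aQ ?pideal_gen.
  have [ideal_P P1 _] := Pmax.
  by have [PQ|P_all] := Qmax P ideal_P QP; [move=> x /PQ | move/negP: P1].
case/splitPr: LQ sL LP Lsub => L1 L2 sL LP Lsub.
have [y y_mon ya] : exists2 y, ideal_monomial (L1 ++ L2) y & y \notin pideal a.
  apply: contrapT => noy.
  have : (k <= size (L1 ++ L2))%N.
    apply/kmin/asboolP; exists (L1 ++ L2); split=> //.
      by move=> P'; rewrite mem_cat => P'L; apply: LP; rewrite mem_cat inE orbCA P'L orbT.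
    move=> y y_mon; apply: contrapT => /negP ya; apply: noy; by exists y.
  by rewrite -sL !size_cat /= addnS ltnn.
have tfa0 : tf a != 0 by rewrite tofrac_eq0.
exists (tf y / tf a); split.
  move=> j /JP /PQ jQ; have /asboolP [r e] := Lsub _ (ideal_monomial_insert y_mon jQ).
  by exists r; rewrite mulrAC -tofracM (mulrC y) e tofracM mulfK.
move=> [r e]; apply/negP: ya; apply/negPn/asboolP; exists r.
by apply: tofrac_inj; rewrite tofracM -e divfK.
Qed.

Definition inv_ideal_pairs I (s : seq (R * {fraction R})) : Prop :=
  forall p, p \in s -> p.1 \in I /\ in_inv_ideal I p.2.

(* The elements [r] with [tf r \in I I^-1] form an ideal containing [I]; were it
   proper, an [x] outside [R] would stabilise [I^-1]. *)
Lemma dedekind_invertible I : dedekind R -> is_ideal I -> (exists2 a, a \in I & a != 0) ->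
  exists2 s, inv_ideal_pairs I s & \sum_(p <- s) tf p.1 * p.2 = 1.
Proof.
move=> dedR ideal_I Inz; have [noethR intclR _] := dedR.
pose J : pred R := fun r =>
  `[< exists2 s, inv_ideal_pairs I s & tf r = \sum_(p <- s) tf p.1 * p.2 >].
have ideal_J : is_ideal J.
  split.
  - by apply/asboolP; exists [::]; rewrite ?big_nil ?tofrac0.
  - move=> x y /asboolP [s1 h1 e1] /asboolP [s2 h2 e2]; apply/asboolP.
    exists (s1 ++ s2); last by rewrite big_cat tofracD e1 e2.
    by move=> p; rewrite mem_cat => /orP [/h1 | /h2].
  - move=> c x /asboolP [s h e]; apply/asboolP.
    exists [seq (p.1, tf c * p.2) | p <- s].
      move=> _ /mapP [p ps ->]; have [p1I p2inv] := h p ps; split=> // t tI.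
      by have [r er] := p2inv t tI; exists (c * r); rewrite tofracM -er mulrA.
    by rewrite big_map tofracM e mulr_sumr; apply: eq_bigr => p _; rewrite mulrCA.
have [J1|J1] := boolP (1 \in J).
  by have /asboolP [s h e] := J1; exists s; rewrite // -e tofrac1.
have IJ : {subset I <= J}.
  move=> t tI; apply/asboolP; exists [:: (t, 1)]; last by rewrite big_seq1 mulr1.
  move=> p; rewrite inE => /eqP -> /=; split=> // u uI; exists u; exact: mul1r.
have [a aI a0] := Inz.
have [|x [xJ xR]] := dedekind_inv_ideal_nontrivial dedR ideal_J J1.
  by exists a; rewrite ?IJ.
case: xR; apply: (inv_ideal_stable_integral noethR intclR ideal_I Inz) => z zinv t tI.
have [rho erho] := zinv t tI.
have rhoJ : rho \in J.
  apply/asboolP; exists [:: (t, z)]; last by rewrite big_seq1 -erho mulrC.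
  by move=> p; rewrite inE => /eqP ->.
by have [r er] := xJ _ rhoJ; exists r; rewrite -mulrA erho.
Qed.

Lemma inv_ideal_pairs_dual_basis I s : is_ideal I -> inv_ideal_pairs I s ->
  \sum_(p <- s) tf p.1 * p.2 = 1 -> exists f, dual_basis I s fst f.
Proof.
move=> ideal_I sI s1.
have /choice [f hf] : forall p : R * {fraction R}, exists g : R -> R,
    p \in s -> forall t, t \in I -> p.2 * tf t = tf (g t).
  move=> p.
  have /choice [g hg] : forall t, exists r, p \in s -> t \in I -> p.2 * tf t = tf r.
    move=> t; have [ps|] := boolP (p \in s); last by exists 0.
    have [tI|] := boolP (t \in I); last by exists 0.
    by have [r er] := (sI p ps).2 t tI; exists r.
  by exists g => ps t tI; apply: hg.
exists f; split.
- by move=> p /sI [].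
- move=> p ps r t tI; apply: tofrac_inj.
  rewrite -(hf p ps _ (idealMl ideal_I r tI)) !tofracM -(hf p ps t tI).
  by rewrite mulrCA.
- move=> t tI; apply: tofrac_inj; rewrite -[tf t]mulr1 -s1 mulr_sumr rmorph_sum.
  rewrite !big_seq; apply: eq_bigr => p ps.
  by rewrite rmorphM /= -(hf p ps t tI); ring.
Qed.

End Dedekind.

Lemma H_zero_dedekind (R : idomainType) (I : pred R) (M : lmodType R) :
  is_ideal I -> dedekind R -> H_zero M I.
Proof.
move=> ideal_I dedR; apply: H_zero_wlog_nonzero => // Inz.
have [s sI s1] := dedekind_invertible dedR ideal_I Inz.
have [f fdual] := inv_ideal_pairs_dual_basis ideal_I sI s1.
exact: H_zero_dual_basis ideal_I fdual.
Qed.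

Section MinimalPrimes.
Variable R : comPzRingType.
Implicit Types (I P Q S : pred R) (L : seq (pred R)).

Lemma mulr_exprD_eq0 (s1 s2 a b : R) m n :
  s1 * a ^+ m = 0 -> s2 * b ^+ n = 0 -> s1 * s2 * (a + b) ^+ (m + n) = 0.
Proof.
move=> sa sb; rewrite exprDn mulr_sumr big1 // => i _; rewrite mulrnAr.
have [lt_in|le_ni] := ltnP i n.
  rewrite -addnBA 1?ltnW // exprD.
  have -> : s1 * s2 * (a ^+ m * a ^+ (n - i) * b ^+ i)
    = s1 * a ^+ m * (s2 * a ^+ (n - i) * b ^+ i) by ring.
  by rewrite sa mul0r mul0rn.
rewrite -(subnKC le_ni) exprD.
have -> : s1 * s2 * (a ^+ (m + n - (n + (i - n))) * (b ^+ n * b ^+ (i - n)))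
  = s2 * b ^+ n * (s1 * a ^+ (m + n - (n + (i - n))) * b ^+ (i - n)) by ring.
by rewrite sb mul0r mul0rn.
Qed.

Definition mult_set (y : R) S : Prop :=
  [/\ forall n, y ^+ n \in S, forall a b, a \in S -> b \in S -> a * b \in S & 0 \notin S].

Lemma reduced_maximal_mult_set y : reduced R -> y != 0 ->
  exists2 S, mult_set y S & forall A, mult_set y A -> {subset S <= A} -> {subset A <= S}.
Proof.
move=> redR y0; apply: Zorn_pred.
  exists (fun z => `[< exists n, z = y ^+ n >]); split.
  - by move=> n; apply/asboolP; exists n.
  - move=> _ _ /asboolP [m ->] /asboolP [n ->]; apply/asboolP.
    by exists (m + n)%N; rewrite exprD.
  - by apply/asboolP => -[n /esym /redR y0']; rewrite y0' eqxx in y0.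
move=> C CS Ctot Cne; exists (chain_union C) => [|A /chain_union_sup //].
have [A CA] := Cne; split.
- by move=> n; apply: (chain_union_sup CA); have [] := CS A CA.
- move=> a b aU bU.
  have abU : {subset [:: a; b] <= chain_union C}.
    by move=> z; rewrite !inE => /orP [] /eqP ->.
  have [B CB sB] := chain_union_seq Ctot Cne abU; have [_ Bmul _] := CS B CB.
  by apply: (chain_union_sup CB); apply: Bmul; apply: sB; rewrite !inE eqxx ?orbT.
- by apply/asboolP => -[B /CS [_ _ /negP]].
Qed.

Section MaximalMultSet.
Variables (y : R) (S : pred R).
Hypotheses (multS : mult_set y S)
  (maxS : forall A, mult_set y A -> {subset S <= A} -> {subset A <= S}).

Lemma mult_set_exp x n : x \in S -> x ^+ n \in S.
Proof.
have [Sy Smul _] := multS; move=> xS.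
by elim: n => [|n IH]; rewrite ?exprS ?Smul //; have := Sy 0%N; rewrite expr0.
Qed.

(* Otherwise the products [s * x ^+ n] form a larger multiplicative set. *)
Lemma maximal_mult_set_annihilates x :
  x \notin S -> exists s n, s \in S /\ s * x ^+ n = 0.
Proof.
move=> xS; apply: contrapT => noann; move/negP: xS; apply.
have [Sy Smul S0] := multS.
pose Sx : pred R := fun z => `[< exists s n, s \in S /\ z = s * x ^+ n >].
apply: (maxS (A := Sx)).
- split.
  + by move=> n; apply/asboolP; exists (y ^+ n), 0%N; rewrite expr0 mulr1.
  + move=> _ _ /asboolP [s1 [n1 [S1 ->]]] /asboolP [s2 [n2 [S2 ->]]]; apply/asboolP.
    by exists (s1 * s2), (n1 + n2)%N; rewrite Smul // exprD mulrACA.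
  + by apply/asboolP => -[s [n [Ss e]]]; apply: noann; exists s, n.
- by move=> z zS; apply/asboolP; exists z, 0%N; rewrite expr0 mulr1.
- by apply/asboolP; exists 1, 1%N; rewrite expr1 mul1r; have := Sy 0%N; rewrite expr0.
Qed.

Lemma maximal_mult_set_compl_minimal_prime : minimal_prime (predC S).
Proof.
have [Sy Smul S0] := multS.
have ann := maximal_mult_set_annihilates.
have S1 : 1 \in S by have := Sy 0%N; rewrite expr0.
have ideal_SC : is_ideal (predC S).
  split; rewrite ?inE //.
  - move=> a b; rewrite !inE => /ann [s1 [n1 [S1' e1]]] /ann [s2 [n2 [S2' e2]]].
    apply/negP => abS; move: S0; rewrite -(mulr_exprD_eq0 e1 e2).
    by rewrite Smul ?Smul // mult_set_exp.
  - move=> r x; rewrite !inE => /ann [s [n [Ss e]]]; apply/negP => rxS.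
    have srx : s * (r * x) ^+ n = 0 by rewrite exprMn mulrCA e mulr0.
    by move/negP: S0; apply; rewrite -srx Smul // mult_set_exp.
have primeP : prime_ideal (predC S).
  split=> //; first by rewrite inE negbK.
  move=> a b; rewrite !inE => abS.
  by have [aS|aS] := boolP (a \in S); [right; apply: contra abS; apply: Smul | left].
split=> // Q [[Q0 _ _] Q1 Qp] QS x xS.
apply: contrapT => /negP xQ; move: xS; rewrite inE => /negP; apply.
apply: (maxS (A := predC Q)); last by rewrite inE.
- split; last by rewrite inE negbK.
  + by move=> n; rewrite inE; apply/negP => /QS; rewrite !inE => /negP; apply; exact: Sy.
  + move=> a b; rewrite !inE => /negP aQ /negP bQ.
    by apply/negP => /Qp [].
- by move=> z zS; rewrite inE; apply/negP => /QS; rewrite !inE => /negP; apply.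
Qed.

End MaximalMultSet.

Lemma reduced_minimal_prime_avoid (y : R) : reduced R -> y != 0 ->
  exists2 P, minimal_prime P & y \notin P.
Proof.
move=> redR y0; have [S multS maxS] := reduced_maximal_mult_set redR y0.
exists (predC S); first exact: maximal_mult_set_compl_minimal_prime maxS.
by rewrite inE negbK; have [Sy _ _] := multS; have := Sy 1%N; rewrite expr1.
Qed.

Lemma prime_avoid_prod P L : prime_ideal P ->
  (forall Q, Q \in L -> is_ideal Q /\ ~ {subset Q <= P}) ->
  exists2 w, w \notin P & forall Q, Q \in L -> w \in Q.
Proof.
move=> [ideal_P P1 Pp]; elim: L => [|Q L IH] LP; first by exists 1.
have [|w wP wL] := IH; first by move=> Q' Q'L; apply: LP; rewrite inE Q'L orbT.
have [ideal_Q QP] := LP Q (mem_head Q L).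
have [q qQ qP] := not_subset_witness QP.
exists (q * w).
  by apply/negP => /Pp [qP'|wP']; [rewrite qP' in qP | rewrite wP' in wP].
move=> Q'; rewrite inE => /orP [/eqP -> | Q'L]; first exact: idealMr.
by apply: (idealMl (LP Q' _).1); rewrite ?inE ?Q'L ?orbT ?wL.
Qed.

(* Given [t] avoiding [L] but lying in [P], the element [t + w * s] avoids [P :: L]
   for [s \in I] outside [P] and [w] in every member of [L] but not in [P]. *)
Lemma minimal_primes_avoidance I L : is_ideal I ->
  (forall P, P \in L -> minimal_prime P /\ ~ {subset I <= P}) ->
  exists2 t, t \in I & forall P, P \in L -> t \notin P.
Proof.
move=> ideal_I; elim: L => [|P L IH] LP; first by exists 0; rewrite ?ideal0.
have LP' Q : Q \in L -> minimal_prime Q /\ ~ {subset I <= Q}.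
  by move=> QL; apply: LP; rewrite inE QL orbT.
have [t tI tL] := IH LP'.
have [[[ideal_P P1 Pp] Pmin] IP] := LP P (mem_head P L).
have [tP|tP] := boolP (t \in P); last first.
  by exists t => // Q; rewrite inE => /orP [/eqP -> | /tL].
have [s sI sP] := not_subset_witness IP.
have [|w wP wL] := @prime_avoid_prod P L (And3 ideal_P P1 Pp).
  move=> Q QL; have [[Qprime _] _] := LP' Q QL.
  split=> [|QP]; first by case: Qprime.
  by move: (tL Q QL); rewrite (Pmin Q Qprime QP t tP).
exists (t + w * s); first by rewrite (idealD ideal_I) ?(idealMl ideal_I).
move=> Q; rewrite inE => /orP [/eqP -> | QL].
  apply/negP => twsP; have /Pp [wP'|sP'] : w * s \in P.
    by rewrite -(addKr t (w * s)) (idealD ideal_P) ?(idealN ideal_P).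
  - by rewrite wP' in wP.
  - by rewrite sP' in sP.
have [[[ideal_Q _ _] _] _] := LP' Q QL.
apply/negP => twsQ; move/negP: (tL Q QL); apply.
by rewrite -(addrK (w * s) t) (idealB ideal_Q) ?(idealMr ideal_Q) ?wL.
Qed.

End MinimalPrimes.

Lemma H_zero_reduced (R : comPzRingType) (I : pred R) :
  is_ideal I -> reduced R -> finitely_many_minimal_primes R -> H_zero R^o I.
Proof.
move=> ideal_I redR [n [f fmin]] phi [hphi hZ]; split=> //.
pose L := [seq P <- codom f | `[< minimal_prime P /\ ~ {subset I <= P} >]].
have [t tI tL] : exists2 t, t \in I & forall P, P \in L -> t \notin P.
  by apply: minimal_primes_avoidance => // P; rewrite mem_filter => /andP [/asboolP].
have [r hr] := hZ t tI; exists r => s sI.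
apply/eqP; rewrite -subr_eq0; apply/negP => /negP y0.
have [P Pmin /negP] := reduced_minimal_prime_avoid redR y0; apply.
have [[ideal_P _ Pp] _] := Pmin.
have [IP|nIP] := pselect {subset I <= P}.
  have [rs ->] := hZ s sI.
  by apply: (idealB ideal_P); apply: (idealMr ideal_P); apply: IP.
have [i fiP] := fmin P Pmin.
have Pf : P = f i by apply/funext => x; apply/idP/idP => /fiP.
have PL : P \in L.
  by rewrite mem_filter; apply/andP; split; [apply/asboolP | rewrite Pf codom_f].
have ty : t * (phi s - s *: r) = 0.
  have scE (a b : R) : a *: (b : R^o) = a * b by [].
  rewrite mulrBr -scE -(hom_onZ ideal_I hphi _ sI) mulrC (hom_onZ ideal_I hphi _ tI) hr.
  by rewrite !scE mulrCA subrr.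
have /Pp [tP|//] : t * (phi s - s *: r) \in P by rewrite ty ideal0.
by move: (tL P PL); rewrite tP.
Qed.

Theorem proposition5p6 :
  (forall (R : comPzRingType) (I : pred R) (M : lmodType R),
      is_ideal I -> principal_ideal I -> H_zero M I) /\
  (forall (R : idomainType) (I : pred R) (M : lmodType R),
      is_ideal I -> torsion_free M -> H_zero M I) /\
  (forall (R : idomainType) (I : pred R) (M : lmodType R),
      is_ideal I -> dedekind R -> H_zero M I) /\
  (forall (R : comPzRingType) (I : pred R),
      is_ideal I -> reduced R -> finitely_many_minimal_primes R ->
      H_zero R^o I).
Proof.
split; first exact: H_zero_principal.
split; first exact: H_zero_torsion_free.
split; first by move=> R I M ideal_I; exact: H_zero_dedekind.
exact: H_zero_reduced.
Qed.
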